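(* Let $M\ge 1$ and let $dq(z)=q(z)\,dz$ be a positive Radon measure on $\mathbb{R}^M$ with density $q\ge 0$ satisfying $$\int_{|z|<1}|z|^{\gamma}\,dq(z)+\int_{|z|\ge 1}|z|^{\gamma-1}\,dq(z)<\infty$$ for $\gamma=2$ or $\gamma=1$. Assume condition (A) holds, with exponent $\alpha\in(0,2)$, set $S_0\subset S=\mathrm{supp}(dq)$ and function $q_0$ as described in the context. Then: (1) $S_0$ is a positive cone: $sS_0\subset S_0$ for all $s>0$; (2) $s^{M+\alpha}q_0(sz)=q_0(z)$ for all $s>0$ and all $z\in S_0$; (3) there is a bounded real-valued function $\overline{q}_0$ on the unit sphere of $\mathbb{R}^M$ such that $q_0(z)=|z|^{-(M+\alpha)}\,\overline{q}_0\!\left(\frac{z}{|z|}\right)$ for all $z\in\mathbb{R}^M\setminus\{0\}$.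
   Context: Condition (A): there exists a constant $\alpha\in(0,2)$ and a constant $C_1>0$ (independent of $\varepsilon$) such that $\varepsilon^{M+\alpha}q(\varepsilon z)\le C_1|z|^{-(M+\alpha)}$ for all $\varepsilon\in(0,1)$ and all $z\in\mathbb{R}^M$; and there exist a subset $S_0\subset S=\mathrm{supp}(dq)$ and a positive function $q_0$ on $S_0$ such that $\lim_{\varepsilon\downarrow 0}\varepsilon^{M+\alpha}q(\varepsilon z)=q_0(z)$ for all $z\in S_0$ and $\lim_{\varepsilon\downarrow 0}\varepsilon^{M+\alpha}q(\varepsilon z)=0$ for all $z\in\mathbb{R}^M\setminus S_0$. The function $q_0$ is extended by $0$ outside $S_0$. *)

From HB Require Import structures.
From mathcomp Require Import all_boot all_order all_algebra.
From mathcomp Require Import all_classical all_reals all_analysis.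
Set Implicit Arguments. Unset Strict Implicit. Unset Printing Implicit Defensive.
Import Order.TTheory GRing.Theory Num.Theory.
Import numFieldNormedType.Exports.
Local Open Scope classical_set_scope.
Local Open Scope ring_scope.

(* Euclidean norm |z| on R^M (the library norm on 'rV is the sup norm). *)
Definition enorm (R : realType) (M : nat) (z : 'rV[R]_M) : R :=
  Num.sqrt (\sum_(i < M) z ord0 i ^+ 2).

Fixpoint iter_lebint (R : realType) (n : nat) (F : seq R -> \bar R) : \bar R :=
  match n with
  | 0 => F [::]
  | n.+1 => (\int[@lebesgue_measure R]_x iter_lebint n (fun s => F (x :: s)))%E
  end.

Definition row_of_seq (R : realType) (M : nat) (s : seq R) : 'rV[R]_M :=
  \row_(i < M) nth 0 s i.

(* Lebesgue integral over R^M of f, computed as an iterated integral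
   (for non-negative measurable f this is the Lebesgue integral on R^M by Tonelli). *)
Definition lebint (R : realType) (M : nat) (f : 'rV[R]_M -> \bar R) : \bar R :=
  iter_lebint M (fun s => f (row_of_seq M s)).

Definition measurable_on_RM (R : realType) (M : nat) (q : 'rV[R]_M -> R) : Prop :=
  measurable_fun [set: M.-tuple R] (fun t : M.-tuple R => q (\row_(i < M) tnth t i)).

Definition supp_dq (R : realType) (M : nat) (q : 'rV[R]_M -> R) : set 'rV[R]_M :=
  [set z | forall U : set 'rV[R]_M, open U -> U z ->
     (0 < lebint (fun w => (q w * \1_U w)%:E))%E].

From HB Require Import structures.
From mathcomp Require Import all_boot all_order all_algebra.
From mathcomp Require Import all_classical all_reals all_analysis.
Import Order.TTheory GRing.Theory Num.Theory.
Import numFieldNormedType.Exports.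
Local Open Scope classical_set_scope.
Local Open Scope ring_scope.
Set Implicit Arguments. Unset Strict Implicit. Unset Printing Implicit Defensive.

(* Substituting eps := eps' * s in the limit defining q0 at s z
   shows that eps^a q(eps s z) tends to s^-a q0(z), where a = M + alpha.
   Uniqueness of limits then gives both the cone property of S0 (the limit is
   positive, so s z cannot lie outside S0) and the homogeneity of q0.  The
   polar formula follows by taking s = 1/|z|, with q0 itself restricted to the
   unit sphere as the angular part; it is bounded there by C1, by passing to
   the limit in the uniform bound of condition (A).  Only condition (A) is
   used. *)

Lemma rescaled_limit_at_right (R : realType) (V : lmodType R) (q : V -> R)
    (a l s : R) (z : V) :
  0 < s ->
  (fun eps : R => eps `^ a * q (eps *: z)) @ 0^'+ --> l ->
  (fun eps : R => eps `^ a * q (eps *: (s *: z))) @ 0^'+ --> s `^ (- a) * l.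
Proof.
move=> s_gt0 /cvg_at_rightP ql; apply/cvg_at_rightP => u [u_gt0 u0].
have -> : (fun n => u n `^ a * q (u n *: (s *: z))) =
    (fun n => s `^ (- a) * ((u n * s) `^ a * q ((u n * s) *: z))).
  apply: funext => n; rewrite scalerA powRM ?(ltW (u_gt0 n)) ?(ltW s_gt0) //.
  rewrite powRN mulrA mulrA [_^-1 * u n `^ a]mulrC -[X in _ = X * _]mulrA.
  by rewrite mulVf ?mulr1 // gt_eqF // powR_gt0.
apply: cvgM; first exact: cvg_cst.
apply: (ql (fun n => u n * s)); split; first by move=> n; rewrite mulr_gt0.
by rewrite -(mul0r s); apply: cvgM => //; exact: cvg_cst.
Qed.

Lemma enorm_gt0 (R : realType) (M : nat) (z : 'rV[R]_M) : z != 0 -> 0 < enorm z.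
Proof.
move=> z_neq0; rewrite /enorm sqrtr_gt0 lt_neqAle sumr_ge0 ?andbT; last first.
  by move=> i _; rewrite sqr_ge0.
apply/eqP => /esym /psumr_eq0P z2_eq0; move/eqP: z_neq0; apply.
apply/matrixP => i j; rewrite (ord1 i) mxE; apply/eqP; rewrite -sqrf_eq0.
by apply/eqP; apply: z2_eq0 => // k _; rewrite sqr_ge0.
Qed.

Lemma enorm0 (R : realType) (M : nat) : enorm (0 : 'rV[R]_M) = 0.
Proof. by rewrite /enorm big1 ?sqrtr0 // => i _; rewrite mxE expr0n. Qed.

Section RescaledLimit.
Variables (R : realType) (M : nat) (q : 'rV[R]_M -> R) (a : R).
Variables (S0 : set 'rV[R]_M) (q0 : 'rV[R]_M -> R).
Hypothesis q0_gt0 : forall z, S0 z -> 0 < q0 z.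
Hypothesis q0_out : forall z, ~ S0 z -> q0 z = 0.
Hypothesis q_lim_in : forall z, S0 z ->
  (fun eps : R => eps `^ a * q (eps *: z)) @ 0^'+ --> q0 z.
Hypothesis q_lim_out : forall z, ~ S0 z ->
  (fun eps : R => eps `^ a * q (eps *: z)) @ 0^'+ --> (0 : R).

Let rescaled_q_lim (s : R) (z : 'rV[R]_M) : 0 < s -> S0 z ->
  (fun eps : R => eps `^ a * q (eps *: (s *: z))) @ 0^'+ --> s `^ (- a) * q0 z.
Proof. by move=> s_gt0 /q_lim_in; exact: rescaled_limit_at_right. Qed.

Lemma limit_support_scale (s : R) (z : 'rV[R]_M) :
  0 < s -> S0 z -> S0 (s *: z).
Proof.
move=> s_gt0 S0z; apply: contrapT => /q_lim_out lim0.
have lim_eq := norm_cvg_unique lim0 (rescaled_q_lim s_gt0 S0z).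
have : 0 < s `^ (- a) * q0 z by rewrite mulr_gt0 ?powR_gt0 ?q0_gt0.
by rewrite -lim_eq ltxx.
Qed.

Lemma limit_homogeneous (s : R) (z : 'rV[R]_M) :
  0 < s -> S0 z -> s `^ a * q0 (s *: z) = q0 z.
Proof.
move=> s_gt0 S0z.
have := norm_cvg_unique (q_lim_in (limit_support_scale s_gt0 S0z))
  (rescaled_q_lim s_gt0 S0z).
by move=> ->; rewrite powRN mulrA mulfV ?mul1r // gt_eqF ?powR_gt0.
Qed.

Lemma limit_polar (z : 'rV[R]_M) : z != 0 ->
  q0 z = enorm z `^ (- a) * q0 ((enorm z)^-1 *: z).
Proof.
move=> z_neq0; have z_gt0 := enorm_gt0 z_neq0.
have [S0z | S0'z] := pselect (S0 z).
  rewrite -{1}(limit_homogeneous (_ : 0 < (enorm z)^-1) S0z) ?invr_gt0 //.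
  by congr (_ * _); rewrite -powR_inv1 ?ltW // -powRrM mulN1r.
rewrite !q0_out ?mulr0 // => /(limit_support_scale z_gt0).
by rewrite scalerA mulfV ?scale1r ?gt_eqF.
Qed.

Lemma limit_le_on_sphere (C : R) :
  (forall eps z, 0 < eps < 1 -> z != 0 ->
     eps `^ a * q (eps *: z) <= C * enorm z `^ (- a)) ->
  0 <= C -> forall th, enorm th = 1 -> `|q0 th| <= C.
Proof.
move=> q_le C_ge0 th th1.
have th_neq0 : th != 0.
  by apply: contra_eq_neq th1 => ->; rewrite enorm0 eq_sym oner_eq0.
have [S0th | S0'th] := pselect (S0 th); last by rewrite q0_out ?normr0.
rewrite ger0_norm; last exact: ltW (q0_gt0 S0th).
apply: (cvgr_to_le (q_lim_in S0th)).
near=> eps; have eps01 : 0 < eps < 1.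
  by apply/andP; split; near: eps; [exact: nbhs_right_gt | exact: nbhs_right_lt].
by have := q_le eps th eps01 th_neq0; rewrite th1 powR1 mulr1.
Unshelve. all: by end_near.
Qed.

End RescaledLimit.

Theorem lemma1p1 (R : realType) (M : nat) (hM : (1 <= M)%N)
  (q : 'rV[R]_M -> R)
  (* dq = q dz is a positive (Radon) measure with density q >= 0 *)
  (q_ge0 : forall z, 0 <= q z)
  (q_meas : measurable_on_RM q)
  (q_loc : forall rho r : R, 0 < rho -> rho < r ->
     (lebint (fun z => (q z * \1_[set w | rho <= enorm w <= r] z)%:E) < +oo)%E)
  (* moment condition, for gamma = 2 or gamma = 1 *)
  (gamma : R) (hgamma : gamma = 2 \/ gamma = 1)
  (q_mom : (lebint (fun z =>
     ((if enorm z < 1 then enorm z `^ gamma else enorm z `^ (gamma - 1)) * q z)%:E)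
       < +oo)%E)
  (* condition (A) *)
  (alpha : R) (halpha : 0 < alpha < 2) (C1 : R) (hC1 : 0 < C1)
  (hA1 : forall (eps : R) (z : 'rV[R]_M), 0 < eps < 1 -> z != 0 ->
     eps `^ (M%:R + alpha) * q (eps *: z) <= C1 * enorm z `^ (- (M%:R + alpha)))
  (S0 : set 'rV[R]_M) (hS0 : S0 `<=` supp_dq q)
  (q0 : 'rV[R]_M -> R) (q0_pos : forall z, S0 z -> 0 < q0 z)
  (q0_out : forall z, ~ S0 z -> q0 z = 0)
  (hA2 : forall z, S0 z ->
     (fun eps : R => eps `^ (M%:R + alpha) * q (eps *: z)) @ 0^'+ --> q0 z)
  (hA3 : forall z, ~ S0 z ->
     (fun eps : R => eps `^ (M%:R + alpha) * q (eps *: z)) @ 0^'+ --> (0 : R)) :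
  (forall (s : R) (z : 'rV[R]_M), 0 < s -> S0 z -> S0 (s *: z)) /\
  (forall (s : R) (z : 'rV[R]_M), 0 < s -> S0 z ->
     s `^ (M%:R + alpha) * q0 (s *: z) = q0 z) /\
  (exists qb : 'rV[R]_M -> R,
     (exists B : R, forall th : 'rV[R]_M, enorm th = 1 -> `|qb th| <= B) /\
     (forall z : 'rV[R]_M, z != 0 ->
        q0 z = enorm z `^ (- (M%:R + alpha)) * qb ((enorm z)^-1 *: z))).
Proof.
split; first exact: limit_support_scale hA2 hA3.
split; first exact: limit_homogeneous hA2 hA3.
exists q0; split; last exact: limit_polar hA2 hA3.
exists C1; exact: (limit_le_on_sphere (a := M%:R + alpha) q0_pos q0_out hA2 hA1 (ltW hC1)).
Qed.
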